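(* Let $A$ and $C$ be machines. There exists a machine $B$ such that $B$ is a functional reduction of $A$ and $C$ is a state reduction of $B$ if and only if there exists a machine $B'$ such that $B'$ is a state reduction of $A$ and $C$ is a functional reduction of $B'$.
   Context: For a set $S$, a transition function on $S$ is a function $S\to S$, and $\Phi_S$ denotes the set of all of them. A machine $S\times\Phi'_S$ is a pair consisting of a set $S$ and a subset $\Phi'_S\subseteq\Phi_S$. Functional reduction: given machines $S\times\Phi'_1$ and $S\times\Phi'_2$ on the same state set, the latter is a functional reduction of the former iff $\Phi'_2\subseteq\Phi'_1$. State reduction: given machines $S\times\Phi'_S$ and $S'\times\Phi'_{S'}$, the latter is a state reduction of the former iff (1) $S'\subseteq S$; (2) for every $\varphi'\in\Phi'_{S'}$ there exists $\varphi\in\Phi'_S$ with $\varphi'(s)=\varphi(s)$ for all $s\in S'$; (3) for every $\varphi\in\Phi'_S$ with $\varphi(S')\subseteq S'$ there exists $\varphi'\in\Phi'_{S'}$ with $\varphi'(s)=\varphi(s)$ for all $s\in S'$. *)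

Set Implicit Arguments.
(* Sets of states are predicates on an ambient type U;
   a transition function on S is a function {x | S x} -> {x | S x};
   a machine with state set S is a set Phi of such functions. *)

Definition trans (U : Type) (S : U -> Prop) : Type := sig S -> sig S.

Definition functional_reduction (U : Type) (S : U -> Prop)
  (Phi1 Phi2 : trans S -> Prop) : Prop :=
  forall phi, Phi2 phi -> Phi1 phi.

Definition state_reduction (U : Type) (S : U -> Prop) (Phi : trans S -> Prop)
  (S' : U -> Prop) (Phi' : trans S' -> Prop) : Prop :=
  exists incl : forall x, S' x -> S x,
    (forall phi' : trans S', Phi' phi' ->
       exists phi : trans S, Phi phi /\
         forall (s : U) (hs : S' s),
           proj1_sig (phi' (exist S' s hs)) = proj1_sig (phi (exist S s (incl s hs))))
    /\
    (forall phi : trans S, Phi phi ->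
       (forall (s : U) (hs : S' s), S' (proj1_sig (phi (exist S s (incl s hs))))) ->
       exists phi' : trans S', Phi' phi' /\
         forall (s : U) (hs : S' s),
           proj1_sig (phi' (exist S' s hs)) = proj1_sig (phi (exist S s (incl s hs)))).


Set Implicit Arguments.

(* Once the inclusion [incl] of S' in S is fixed, condition (2) of a state
   reduction says that Phi' consists of restrictions of functions of Phi, and
   condition (3) that every function of Phi preserving S' restricts into Phi'.
   So for A >= B |> C take B' := all restrictions of functions of A, and for
   A |> B' >= C take B := the functions of A whose restriction, whenever it
   exists, lies in C. *)

Section Restriction.

Variables (U : Type) (S S' : U -> Prop).
Variable incl : forall x, S' x -> S x.

Definition agrees (phi : trans S) (phi' : trans S') : Prop :=
  forall (s : U) (hs : S' s),
    proj1_sig (phi' (exist S' s hs)) = proj1_sig (phi (exist S s (incl hs))).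

Definition preserves (phi : trans S) : Prop :=
  forall (s : U) (hs : S' s), S' (proj1_sig (phi (exist S s (incl hs)))).

Definition restrict (phi : trans S) (hphi : preserves phi) : trans S' :=
  fun x => exist S' (proj1_sig (phi (exist S (proj1_sig x) (incl (proj2_sig x)))))
                    (hphi _ (proj2_sig x)).

Lemma agrees_restrict (phi : trans S) (hphi : preserves phi) :
  agrees phi (restrict hphi).
Proof. intros s hs. reflexivity. Qed.

Definition restrictions (Phi : trans S -> Prop) (phi' : trans S') : Prop :=
  exists phi, Phi phi /\ agrees phi phi'.

Definition restrictions_in (Phi : trans S -> Prop) (Phi' : trans S' -> Prop) : Prop :=
  forall phi, Phi phi -> preserves phi -> exists phi', Phi' phi' /\ agrees phi phi'.

Definition restricting_into (Phi : trans S -> Prop) (Phi' : trans S' -> Prop)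
  (phi : trans S) : Prop :=
  Phi phi /\ (preserves phi -> exists phi', Phi' phi' /\ agrees phi phi').

Lemma restrictions_monotone (Phi1 Phi2 : trans S -> Prop) :
  functional_reduction Phi1 Phi2 ->
  functional_reduction (restrictions Phi1) (restrictions Phi2).
Proof.
  intros H12 phi' [phi [Hphi Hag]].
  exists phi. split; [apply H12 |]; assumption.
Qed.

Lemma restrictions_in_restrictions (Phi : trans S -> Prop) :
  restrictions_in Phi (restrictions Phi).
Proof.
  intros phi Hphi Hpres.
  exists (restrict Hpres). split.
  - exists phi. split; [assumption | apply agrees_restrict].
  - apply agrees_restrict.
Qed.

Lemma restrictions_in_restricting_into (Phi : trans S -> Prop) (Phi' : trans S' -> Prop) :
  restrictions_in (restricting_into Phi Phi') Phi'.
Proof. intros phi [_ Hphi]. exact Hphi. Qed.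

Lemma restrictions_restricting_into (Phi : trans S -> Prop) (Phi' : trans S' -> Prop) :
  functional_reduction (restrictions Phi) Phi' ->
  functional_reduction (restrictions (restricting_into Phi Phi')) Phi'.
Proof.
  intros Hlift phi' Hphi'.
  destruct (Hlift phi' Hphi') as [phi [Hphi Hag]].
  exists phi. repeat split; try assumption.
  intros _. exists phi'. split; assumption.
Qed.

End Restriction.

Lemma state_reductionE (U : Type) (S : U -> Prop) (Phi : trans S -> Prop)
  (S' : U -> Prop) (Phi' : trans S' -> Prop) :
  state_reduction Phi Phi' <->
  exists incl : forall x, S' x -> S x,
    functional_reduction (restrictions incl Phi) Phi' /\ restrictions_in incl Phi Phi'.
Proof. apply iff_refl. Qed.

Lemma functional_reduction_refl (U : Type) (S : U -> Prop) (Phi : trans S -> Prop) :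
  functional_reduction Phi Phi.
Proof. intros phi Hphi. exact Hphi. Qed.

Lemma functional_reduction_trans (U : Type) (S : U -> Prop)
  (Phi1 Phi2 Phi3 : trans S -> Prop) :
  functional_reduction Phi1 Phi2 -> functional_reduction Phi2 Phi3 ->
  functional_reduction Phi1 Phi3.
Proof. intros H12 H23 phi Hphi. apply H12, H23, Hphi. Qed.

Theorem lemma3 (U : Type) (SA : U -> Prop) (PhiA : trans SA -> Prop)
  (SC : U -> Prop) (PhiC : trans SC -> Prop) :
  (exists PhiB : trans SA -> Prop,
      functional_reduction PhiA PhiB /\ state_reduction PhiB PhiC)
  <->
  (exists PhiB' : trans SC -> Prop,
      state_reduction PhiA PhiB' /\ functional_reduction PhiB' PhiC).
Proof.
  split.
  - intros [PhiB [HAB HBC]].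
    apply state_reductionE in HBC as [incl [HliftBC _]].
    exists (restrictions incl PhiA). split.
    + apply state_reductionE. exists incl.
      split; [apply functional_reduction_refl | apply restrictions_in_restrictions].
    + apply (functional_reduction_trans (restrictions_monotone (incl := incl) HAB)).
      exact HliftBC.
  - intros [PhiB' [HAB' HB'C]].
    apply state_reductionE in HAB' as [incl [HliftAB' _]].
    exists (restricting_into incl PhiA PhiC). split.
    + intros phi [Hphi _]. exact Hphi.
    + apply state_reductionE. exists incl. split.
      * apply restrictions_restricting_into.
        exact (functional_reduction_trans HliftAB' HB'C).
      * apply restrictions_in_restricting_into.
Qed.
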